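(* Let $T=(T,\eta,\mu)$ be a monad on the category $\mathbf{Sets}$, let $a\colon T(X)\to X$ be a $T$-algebra and $b\colon X\to T(X)$ a basis ($\overline{T}$-coalgebra) on $a$. Let $X_b=\{x\in X\mid b(x)=\eta_X(x)\}$ with inclusion $e\colon X_b\hookrightarrow X$ (the equaliser of $b$ and $\eta_X$). If $X_b\neq\emptyset$, then $a\circ T(e)\colon T(X_b)\to X$ is an isomorphism of $T$-algebras from the free algebra $\mu_{X_b}\colon T^2(X_b)\to T(X_b)$ to $a$, and it is also an isomorphism of $\overline{T}$-coalgebras from $T(\eta_{X_b})$ to $b$. In particular, every $T$-algebra admitting a basis with nonempty $X_b$ is (isomorphic to) a free algebra.
   Context: For a monad $T=(T,\eta,\mu)$, an Eilenberg–Moore algebra is $a\colon T(X)\to X$ with $a\circ\eta_X=\mathrm{id}$, $a\circ\mu_X=a\circ T(a)$. The comonad $\overline{T}$ on algebras sends $a$ to $\mu_X\colon T^2X\to TX$, with counit $a$ and comultiplication $T(\eta_X)$. A basis ($\overline{T}$-coalgebra) on the algebra $a\colon TX\to X$ is a map $b\colon X\to TX$ with $b\circ a=\mu_X\circ T(b)$, $a\circ b=\mathrm{id}_X$ and $T(\eta_X)\circ b=T(b)\circ b$. For the free algebra $\mu_Y$, $T(\eta_Y)$ is a basis. *)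

(* a monad on the category Sets, modelled with Rocq types
   as sets and Rocq functions as maps; equalities of maps are stated
   pointwise. *)
Set Implicit Arguments.

Record monad : Type := Monad {
  T : Type -> Type;
  fmap : forall (A B : Type), (A -> B) -> T A -> T B;
  eta : forall A : Type, A -> T A;
  mu : forall A : Type, T (T A) -> T A;
  fmap_id : forall A (t : T A), fmap (fun x => x) t = t;
  fmap_comp : forall A B C (f : A -> B) (g : B -> C) (t : T A),
      fmap (fun x => g (f x)) t = fmap g (fmap f t);
  eta_nat : forall A B (f : A -> B) (x : A), fmap f (eta x) = eta (f x);
  mu_nat : forall A B (f : A -> B) (t : T (T A)),
      fmap f (mu t) = mu (fmap (fmap f) t);
  mu_eta_l : forall A (t : T A), mu (eta t) = t;
  mu_eta_r : forall A (t : T A), mu (fmap (@eta A) t) = t;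
  mu_assoc : forall A (t : T (T (T A))), mu (mu t) = mu (fmap (@mu A) t)
}.

Arguments fmap m {A B} f t.
Arguments eta m {A} x.
Arguments mu m {A} t.

Definition is_algebra (M : monad) (X : Type) (a : T M X -> X) : Prop :=
  (forall x : X, a (eta M x) = x) /\
  (forall t : T M (T M X), a (mu M t) = a (fmap M a t)).

Definition is_basis (M : monad) (X : Type) (a : T M X -> X) (b : X -> T M X)
  : Prop :=
  (forall t : T M X, b (a t) = mu M (fmap M b t)) /\
  (forall x : X, a (b x) = x) /\
  (forall x : X, fmap M (@eta M X) (b x) = fmap M b (b x)).

Definition is_alg_hom (M : monad) (A B : Type) (alpha : T M A -> A)
  (beta : T M B -> B) (f : A -> B) : Prop :=
  forall t : T M A, f (alpha t) = beta (fmap M f t).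

(* Homomorphism of T-bar-coalgebras from (A, c) to (B, d), where the comonad
   T-bar sends an algebra map f to T f. *)
Definition is_coalg_hom (M : monad) (A B : Type) (c : A -> T M A)
  (d : B -> T M B) (f : A -> B) : Prop :=
  forall x : A, d (f x) = fmap M f (c x).

Definition Xb (M : monad) (X : Type) (b : X -> T M X) : Type :=
  { x : X | b x = eta M x }.

Definition Xb_incl (M : monad) (X : Type) (b : X -> T M X) (y : @Xb M X b) : X :=
  proj1_sig y.

Arguments is_algebra {M X} a.
Arguments is_basis {M X} a b.
Arguments is_alg_hom {M A B} alpha beta f.
Arguments is_coalg_hom {M A B} c d f.
Arguments Xb {M X} b.
Arguments Xb_incl {M X} b y.

(* Write e : X_b -> X for the inclusion and phi = a o T e.  The proof runs in
   three stages.
   - Generic facts: a o T g is always an algebra map out of a free algebra,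
     and the inverse of a bijective algebra (resp. coalgebra) map is again
     one.
   - The key property of a basis: every element b x only "involves" points of
     X_b, i.e. T f (b x) = b x for any f : X -> X fixing X_b pointwise.  This
     follows from the coassociativity law T eta o b = T b o b, by factoring f
     through b with a map q : T X -> X satisfying q o eta = id.
   - Since X_b is nonempty it has a retraction r : X -> X_b; the candidate
     inverse is psi = T r o b.  The key property gives phi o psi = id, and the
     coalgebra law of phi gives psi o phi = id. *)
From Stdlib Require Import ClassicalEpsilon FunctionalExtensionality ProofIrrelevance.

Lemma fmap_ext (M : monad) {A B : Type} (f g : A -> B) (t : T M A) :
  (forall x, f x = g x) -> fmap M f t = fmap M g t.
Proof. intros H. f_equal. apply functional_extensionality. exact H. Qed.

Lemma fmap_fmap (M : monad) {A B C : Type} (f : A -> B) (g : B -> C) (t : T M A) :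
  fmap M g (fmap M f t) = fmap M (fun x => g (f x)) t.
Proof. symmetry. apply fmap_comp. Qed.

Lemma fmap_id_ext (M : monad) {A : Type} (f : A -> A) (t : T M A) :
  (forall x, f x = x) -> fmap M f t = t.
Proof. intros H. rewrite (fmap_ext M f (fun x => x) t H). apply fmap_id. Qed.

Lemma free_alg_hom {M : monad} {X Y : Type} {a : T M X -> X} (g : Y -> X) :
  is_algebra a -> is_alg_hom (@mu M Y) a (fun t => a (fmap M g t)).
Proof.
  intros [_ Ha_mu] t.
  rewrite mu_nat, Ha_mu, fmap_fmap. reflexivity.
Qed.

Lemma alg_hom_inverse {M : monad} {A B : Type} {alpha : T M A -> A}
  {beta : T M B -> B} {f : A -> B} {g : B -> A} :
  is_alg_hom alpha beta f -> (forall x, g (f x) = x) -> (forall y, f (g y) = y) ->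
  is_alg_hom beta alpha g.
Proof.
  intros Hf Hgf Hfg t.
  assert (Ht : t = fmap M f (fmap M g t)).
  { rewrite fmap_fmap. symmetry. apply fmap_id_ext. exact Hfg. }
  rewrite Ht at 1. rewrite <- Hf. apply Hgf.
Qed.

Lemma coalg_hom_inverse {M : monad} {A B : Type} {c : A -> T M A}
  {d : B -> T M B} {f : A -> B} {g : B -> A} :
  is_coalg_hom c d f -> (forall x, g (f x) = x) -> (forall y, f (g y) = y) ->
  is_coalg_hom d c g.
Proof.
  intros Hf Hgf Hfg y.
  rewrite <- (Hfg y) at 2. rewrite Hf, fmap_fmap.
  symmetry. apply fmap_id_ext. exact Hgf.
Qed.

Lemma subset_retraction {X : Type} {P : X -> Prop} :
  inhabited {x : X | P x} ->
  exists r : X -> {x : X | P x}, forall y, r (proj1_sig y) = y.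
Proof.
  intros [y0].
  exists (fun x => match excluded_middle_informative (P x) with
                   | left h => exist P x h
                   | right _ => y0 end).
  intros [y hy]; simpl.
  destruct (excluded_middle_informative (P y)) as [h | h].
  - f_equal. apply proof_irrelevance.
  - contradiction.
Qed.

Section Basis.

Variable M : monad.
Variable X : Type.
Variable a : T M X -> X.
Variable b : X -> T M X.
Hypothesis Ha : is_algebra a.
Hypothesis Hb : is_basis a b.

(* With q u := a u if u = eta (a u), f (a u)
   otherwise, we get q o b = f and q o eta = id, so that
   T f o b = T q o T b o b = T q o T eta o b = b. *)
Lemma basis_fixed (f : X -> X) :
  (forall x, b x = eta M x -> f x = x) -> forall x, fmap M f (b x) = b x.
Proof.
  destruct Ha as [Ha_eta _]. destruct Hb as [_ [Hab Hcoassoc]].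
  intros Hf x.
  set (q := fun u : T M X =>
              if excluded_middle_informative (u = eta M (a u)) then a u
              else f (a u)).
  assert (Hqb : forall y, q (b y) = f y).
  { intros y. unfold q. rewrite Hab.
    destruct (excluded_middle_informative (b y = eta M y)) as [h | _];
      [symmetry; apply Hf, h | reflexivity]. }
  assert (Hqeta : forall y, q (eta M y) = y).
  { intros y. unfold q. rewrite Ha_eta.
    destruct (excluded_middle_informative (eta M y = eta M y)); [reflexivity | contradiction]. }
  rewrite <- (fmap_ext M (fun y => q (b y)) f) by exact Hqb.
  rewrite fmap_comp, <- Hcoassoc, fmap_fmap.
  apply fmap_id_ext. exact Hqeta.
Qed.

Definition comparison (t : T M (Xb b)) : X := a (fmap M (Xb_incl b) t).

Lemma comparison_eta (y : Xb b) : comparison (eta M y) = Xb_incl b y.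
Proof. unfold comparison. rewrite eta_nat. apply (proj1 Ha). Qed.

(* phi is a coalgebra map: b o phi = mu o T b o T e = T phi o T eta, using
   b (e y) = eta (e y) on X_b. *)
Lemma comparison_coalg_hom :
  is_coalg_hom (fmap M (@eta M (Xb b))) b comparison.
Proof.
  destruct Hb as [Hb_a _].
  intros t. unfold comparison at 1. rewrite Hb_a, fmap_fmap.
  rewrite (fmap_ext M _ (fun y => eta M (Xb_incl b y))) by (intros [y hy]; exact hy).
  rewrite <- fmap_fmap, mu_eta_r, fmap_fmap.
  apply fmap_ext. intros y. symmetry. apply comparison_eta.
Qed.

Section Inverse.

Variable r : X -> Xb b.
Hypothesis Hr : forall y, r (Xb_incl b y) = y.

Definition decomposition (x : X) : T M (Xb b) := fmap M r (b x).

Lemma decomposition_comparison (t : T M (Xb b)) :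
  decomposition (comparison t) = t.
Proof.
  unfold decomposition. rewrite comparison_coalg_hom, !fmap_fmap.
  apply fmap_id_ext. intros y. rewrite comparison_eta. apply Hr.
Qed.

Lemma comparison_decomposition (x : X) : comparison (decomposition x) = x.
Proof.
  unfold comparison, decomposition. rewrite fmap_fmap, basis_fixed.
  - apply (proj1 (proj2 Hb)).
  - intros y hy. exact (f_equal (Xb_incl b) (Hr (exist _ y hy))).
Qed.

End Inverse.

End Basis.

Arguments comparison {M X} a b t.
Arguments decomposition {M X} b r x.
Arguments comparison_coalg_hom {M X a b} Ha Hb x.
Arguments decomposition_comparison {M X a b} Ha Hb {r} Hr t.
Arguments comparison_decomposition {M X a b} Ha Hb {r} Hr x.

Theorem proposition3p1 (M : monad) (X : Type) (a : T M X -> X)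
  (b : X -> T M X) (Ha : is_algebra a) (Hb : is_basis a b)
  (Hne : inhabited (Xb b)) :
  let phi := fun t : T M (Xb b) => a (fmap M (Xb_incl b) t) in
  (* phi is an isomorphism of T-algebras mu_{X_b} -> a ... *)
  is_alg_hom (@mu M (Xb b)) a phi /\
  (* ... and of T-bar-coalgebras T(eta_{X_b}) -> b *)
  is_coalg_hom (fmap M (@eta M (Xb b))) b phi /\
  exists psi : X -> T M (Xb b),
    (forall t, psi (phi t) = t) /\ (forall x, phi (psi x) = x) /\
    is_alg_hom a (@mu M (Xb b)) psi /\
    is_coalg_hom b (fmap M (@eta M (Xb b))) psi.
Proof.
  intros phi.
  destruct (subset_retraction Hne) as [r Hr].
  pose proof (free_alg_hom (Xb_incl b) Ha : is_alg_hom (@mu M (Xb b)) a phi) as Halg.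
  pose proof (comparison_coalg_hom Ha Hb) as Hcoalg.
  pose proof (decomposition_comparison Ha Hb Hr) as Hpsi_phi.
  pose proof (comparison_decomposition Ha Hb Hr) as Hphi_psi.
  split; [exact Halg |]. split; [exact Hcoalg |].
  exists (decomposition b r).
  repeat split; try assumption.
  - exact (alg_hom_inverse Halg Hpsi_phi Hphi_psi).
  - exact (coalg_hom_inverse Hcoalg Hpsi_phi Hphi_psi).
Qed.
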